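(* Let $k\ge2$, let $\mathcal{F}\subset 2^{[n]}$ be weakly $k$-cross-free, and let $\mathcal{C}_1,\dots,\mathcal{C}_k$ be nonempty chains with $\mathcal{C}_l\subset\mathcal{F}_{j_l}$ for integers $j_1<\dots<j_k$. For each $l$ fix a set $Y(\mathcal{C}_l)$ as described in the context. Then there do not exist $k$ distinct elements $y_1,\dots,y_k\in[n]$ such that $(\mathcal{C}_1,\dots,\mathcal{C}_k)$ is good for each of $y_1,\dots,y_k$.
   Context: Sets $A,B$ are weakly crossing if $A\setminus B$, $B\setminus A$, $A\cap B$ are all non-empty; a family is weakly $k$-cross-free if it contains no $k$ pairwise weakly crossing sets. $\mathcal{F}_i=\{X\in\mathcal{F}:2^i<|X|\le 2^{i+1}\}$. A chain is written $\mathcal{C}(1)\subsetneq\dots\subsetneq\mathcal{C}(l)$. $Y(\mathcal{C})$ is a set obtained by choosing one element of $\mathcal{C}(1)$ and one element of each difference $\mathcal{C}(j+1)\setminus\mathcal{C}(j)$, $j=1,\dots,l-1$. The $k$-tuple $(\mathcal{C}_1,\dots,\mathcal{C}_k)$ is good for $y$ if (i) $y\in Y(\mathcal{C}_l)$ for every $l\in[k]$ and (ii) letting $C_l$ be the smallest set in $\mathcal{C}_l$ containing $y$, we have $C_1\subset C_2\subset\dots\subset C_k$. *)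

From HB Require Import structures.
From mathcomp Require Import all_boot all_order all_algebra.
Set Implicit Arguments. Unset Strict Implicit. Unset Printing Implicit Defensive.
Import Order.TTheory GRing.Theory Num.Theory.

Definition wcross (n : nat) (A B : {set 'I_n}) : bool :=
  [&& A :\: B != set0, B :\: A != set0 & A :&: B != set0].

Definition weakly_k_cross_free (n k : nat) (F : {set {set 'I_n}}) : Prop :=
  forall S : {set {set 'I_n}}, S \subset F -> #|S| = k ->
    ~ (forall A B, A \in S -> B \in S -> A != B -> wcross A B).

Definition Flevel (n : nat) (F : {set {set 'I_n}}) (i : int) : {set {set 'I_n}} :=
  [set X in F | ((2%:Q ^ i < (#|X|)%:R) && ((#|X|)%:R <= 2%:Q ^ (i + 1)))%R].

(* A (nonempty) chain C(1) ⊊ ... ⊊ C(l) is a nonempty seq, strictly increasing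
   for proper inclusion; C(j+1) is nth set0 C j. *)
Definition is_chain (n : nat) (C : seq {set 'I_n}) : bool :=
  (C != [::]) && sorted (fun A B : {set 'I_n} => A \proper B) C.

(* Y is a valid choice of Y(C): one element of C(1) and one element of each
   difference C(j+1) \ C(j). *)
Definition isY (n : nat) (C : seq {set 'I_n}) (Y : {set 'I_n}) : Prop :=
  exists f : nat -> 'I_n,
    (forall i, i < size C ->
       f i \in nth set0 C i :\: (if i is i'.+1 then nth set0 C i' else set0))
    /\ Y = [set f (val i) | i : 'I_(size C)].

Definition smallest_in (n : nat) (C : seq {set 'I_n}) (y : 'I_n) : {set 'I_n} :=
  nth set0 C (find (fun X : {set 'I_n} => y \in X) C).

Definition good_for (n k : nat) (C : 'I_k -> seq {set 'I_n})
    (Y : 'I_k -> {set 'I_n}) (y : 'I_n) : Prop :=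
  (forall l, y \in Y l) /\
  (forall l l' : 'I_k, l <= l' -> smallest_in (C l) y \subset smallest_in (C l') y).

From HB Require Import structures.
From mathcomp Require Import all_boot all_order all_algebra.
Import Order.TTheory GRing.Theory Num.Theory.
Set Implicit Arguments. Unset Strict Implicit.

(* Proof idea: an element y of Y(C) is determined by the position of the
   smallest set of C containing y.  Order y_1, ..., y_k so that their
   positions in C_1 decrease, and let A_l be the smallest set of C_l containing
   y_l.  Goodness transports the chain order of C_1 to every C_l, so for l < l'
   the element y_l lies in A_l \ A_l', y_l' lies in A_l ∩ A_l', and A_l' \ A_l
   is nonempty because A_l' lies in a strictly higher level than A_l.  Hence
   A_1, ..., A_k are k pairwise weakly crossing members of F. *)

Section Chains.

Variable n : nat.
Implicit Types (C : seq {set 'I_n}) (Y : {set 'I_n}) (y : 'I_n).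

Local Notation proper_chain C := (sorted (fun A B : {set 'I_n} => A \proper B) C).

Definition chain_rank C y : nat := find (fun X : {set 'I_n} => y \in X) C.

Lemma sorted_proper_nth_subset C i i' : proper_chain C ->
  i <= i' -> i' < size C -> nth set0 C i \subset nth set0 C i'.
Proof.
move=> hC; rewrite leq_eqVlt => /orP[/eqP -> _ | lt_ii' lt_i'C]; first exact: subxx.
apply: proper_sub; apply: (sorted_ltn_nth _ set0 hC); rewrite ?inE //.
- by move=> B A D; apply: proper_trans.
- exact: ltn_trans lt_ii' lt_i'C.
Qed.

Lemma chain_rank_le C y i : y \in nth set0 C i -> chain_rank C y <= i.
Proof. by move=> yCi; rewrite leqNgt; apply/negP => /(before_find set0); rewrite yCi. Qed.

Lemma mem_smallest_in C y : chain_rank C y < size C -> y \in smallest_in C y.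
Proof. by rewrite -has_find => /(nth_find set0). Qed.

Lemma chain_rank_transversal C (f : nat -> 'I_n) : proper_chain C ->
  (forall i, i < size C ->
     f i \in nth set0 C i :\: (if i is i'.+1 then nth set0 C i' else set0)) ->
  forall i, i < size C -> chain_rank C (f i) = i.
Proof.
move=> hC hf i iC; have /setDP[fiCi fiCi'] := hf i iC.
apply/eqP; rewrite eqn_leq chain_rank_le //= leqNgt; apply/negP.
case: i iC fiCi fiCi' => // i iC _ /negP fiCi' lt_rank; apply: fiCi'.
apply: (subsetP (sorted_proper_nth_subset hC (lt_rank : _ <= i) (ltnW iC))).
by apply: mem_smallest_in; apply: ltn_trans lt_rank iC.
Qed.

Lemma isY_chain_rank_lt C Y : proper_chain C -> isY C Y ->
  {in Y, forall y, chain_rank C y < size C}.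
Proof.
by move=> hC [f [hf ->]] _ /imsetP[i _ ->]; rewrite chain_rank_transversal ?ltn_ord.
Qed.

Lemma isY_chain_rank_inj C Y : proper_chain C -> isY C Y ->
  {in Y &, injective (chain_rank C)}.
Proof.
move=> hC [f [hf ->]] _ _ /imsetP[i _ ->] /imsetP[i' _ ->].
by rewrite !chain_rank_transversal ?ltn_ord // => /val_inj ->.
Qed.

End Chains.

Section GoodChains.

Variables (n k : nat) (C : 'I_k -> seq {set 'I_n}) (Y : 'I_k -> {set 'I_n}).
Variable ys : 'I_k -> 'I_n.
Hypothesis C_sorted : forall l, sorted (fun A B : {set 'I_n} => A \proper B) (C l).
Hypothesis CY : forall l, isY (C l) (Y l).
Hypothesis ys_inj : injective ys.
Hypothesis ys_good : forall m, good_for C Y (ys m).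

Local Notation rank l m := (chain_rank (C l) (ys m)).

Lemma good_rank_lt l m : rank l m < size (C l).
Proof. exact: isY_chain_rank_lt (C_sorted l) (CY l) _ ((ys_good m).1 l). Qed.

Lemma good_rank_inj l : injective (fun m => rank l m).
Proof.
move=> a b /(isY_chain_rank_inj (C_sorted l) (CY l)) eq_ys.
by apply/ys_inj/eq_ys; apply: (ys_good _).1.
Qed.

Lemma good_mem_smallest_lower (l0 l : 'I_k) a b :
  l0 <= l -> rank l0 b < rank l0 a -> ys b \in smallest_in (C l) (ys a).
Proof.
move=> l0l lt_ba; apply: (subsetP ((ys_good a).2 _ _ l0l)).
apply: (subsetP (sorted_proper_nth_subset (C_sorted l0) (ltnW lt_ba) (good_rank_lt _ _))).
exact: mem_smallest_in (good_rank_lt _ _).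
Qed.

(* The ranks of a and b in C l would coincide, and ranks separate the y's. *)
Lemma good_notin_smallest_higher (l0 l : 'I_k) a b :
  l0 <= l -> rank l0 b < rank l0 a -> ys a \notin smallest_in (C l) (ys b).
Proof.
move=> l0l lt_ba; apply/negP => /chain_rank_le le_ab.
have le_ba := chain_rank_le (good_mem_smallest_lower l0l lt_ba).
have /good_rank_inj eq_ab : rank l a = rank l b by apply/eqP; rewrite eqn_leq le_ab.
by move: lt_ba; rewrite eq_ab ltnn.
Qed.

End GoodChains.

Section DescendingRank.

Variables (k : nat) (r : 'I_k -> nat).
Hypothesis r_inj : injective r.

Lemma card_rank_above_lt m : #|[set m' | r m < r m']| < k.
Proof.
rewrite -[k in _ < k]card_ord -cardsT; apply: proper_card; apply/properP.
by split; [apply: subsetT | exists m; rewrite ?inE ?ltnn].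
Qed.

Definition desc_rank m : 'I_k := Ordinal (card_rank_above_lt m).

Lemma desc_rank_ltE a b : (desc_rank a < desc_rank b) = (r b < r a).
Proof.
have lt_desc c d : r d < r c -> desc_rank c < desc_rank d.
  move=> lt_dc; apply: proper_card; apply/properP; split.
    by apply/subsetP => x; rewrite !inE; apply: ltn_trans.
  by exists c; rewrite !inE ?ltnn.
case: (ltngtP (r b) (r a)) => [lt_ba | lt_ab | /r_inj ->].
- exact: lt_desc.
- by apply/negbTE; rewrite -leqNgt; apply/ltnW/lt_desc.
- by rewrite ltnn.
Qed.

Lemma desc_rank_inj : injective desc_rank.
Proof.
move=> a b eq_ab; apply: r_inj; case: (ltngtP (r a) (r b)) => // [lt_ab | lt_ba].
- by move: (desc_rank_ltE b a); rewrite eq_ab ltnn lt_ab.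
- by move: (desc_rank_ltE a b); rewrite eq_ab ltnn lt_ba.
Qed.

End DescendingRank.

Section WeakCrossing.

Variable n : nat.
Implicit Types A B : {set 'I_n}.

Lemma wcrossC A B : wcross A B = wcross B A.
Proof. by rewrite /wcross setIC andbCA. Qed.

Lemma wcross_neq A B : wcross A B -> A != B.
Proof. by case/and3P => AB _ _; apply: contraNneq AB => ->; rewrite setDv. Qed.

Lemma wcross_witness A B x y :
  x \in A :\: B -> y \in A :&: B -> #|A| < #|B| -> wcross A B.
Proof.
move=> xAB yAB lt_AB; apply/and3P; split;
  [by apply/set0Pn; exists x | | by apply/set0Pn; exists y].
rewrite setD_eq0; apply: contraTN lt_AB => /subset_leq_card.
by rewrite leqNgt.
Qed.

Lemma Flevel_card_lt (F : {set {set 'I_n}}) (i i' : int) A B : (i < i')%R ->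
  A \in Flevel F i -> B \in Flevel F i' -> #|A| < #|B|.
Proof.
move=> lt_ii'; rewrite !inE => /and3P[_ _ A_le] /and3P[_ B_gt _].
rewrite -(ltr_nat rat); apply: le_lt_trans A_le (le_lt_trans _ B_gt).
by rewrite ler_eXz2l ?lezD1 // ltr1n.
Qed.

Lemma weakly_k_cross_free_family k (F : {set {set 'I_n}}) (A : 'I_k -> {set 'I_n}) :
  weakly_k_cross_free k F -> (forall m, A m \in F) ->
  ~ (forall a b, a != b -> wcross (A a) (A b)).
Proof.
move=> hF AF A_cross; have A_inj : injective A.
  by move=> a b; apply: contra_eq => /A_cross/wcross_neq.
apply: (hF [set A m | m : 'I_k]).
- by apply/subsetP => _ /imsetP[m _ ->].
- by rewrite card_imset // card_ord.
- by move=> _ _ /imsetP[a _ ->] /imsetP[b _ ->]; rewrite (inj_eq A_inj); apply: A_cross.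
Qed.

End WeakCrossing.

Theorem claim5 (n k : nat) (hk : 2 <= k) (F : {set {set 'I_n}})
  (hF : weakly_k_cross_free k F)
  (C : 'I_k -> seq {set 'I_n}) (j : 'I_k -> int)
  (hj : forall l l' : 'I_k, l < l' -> (j l < j l')%R)
  (hC : forall l, is_chain (C l))
  (hCF : forall l, all (fun X : {set 'I_n} => X \in Flevel F (j l)) (C l))
  (Y : 'I_k -> {set 'I_n}) (hY : forall l, isY (C l) (Y l)) :
  ~ (exists ys : 'I_k -> 'I_n, injective ys /\ forall m, good_for C Y (ys m)).
Proof.
move=> [ys [ys_inj ys_good]].
have C_sorted l : sorted (fun A B : {set 'I_n} => A \proper B) (C l).
  by case/andP: (hC l).
pose l0 : 'I_k := Ordinal (ltnW hk).
have l0_min (l : 'I_k) : l0 <= l := leq0n l.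
pose r m := chain_rank (C l0) (ys m).
have r_inj : injective r := good_rank_inj C_sorted hY ys_inj ys_good (l := l0).
pose c := desc_rank r.
pose A m := smallest_in (C (c m)) (ys m).
have memA m : ys m \in A m.
  exact: mem_smallest_in (good_rank_lt C_sorted hY ys_good (c m) m).
have AF m : A m \in Flevel F (j (c m)).
  by apply/(allP (hCF _))/mem_nth/(good_rank_lt C_sorted hY ys_good).
apply: (weakly_k_cross_free_family hF (A := A)).
  by move=> m; move: (AF m); rewrite inE => /andP[].
suff lt_cross a b : c a < c b -> wcross (A a) (A b).
  move=> a b; rewrite -(inj_eq (desc_rank_inj r_inj)) neq_ltn.
  by case/orP => /lt_cross; rewrite // wcrossC.
move=> lt_ab; have lt_r : r b < r a by rewrite -(desc_rank_ltE r_inj).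
apply: (@wcross_witness _ _ _ (ys a) (ys b)).
- by rewrite inE memA
     (good_notin_smallest_higher C_sorted hY ys_inj ys_good (l0_min _) lt_r).
- by rewrite inE memA (good_mem_smallest_lower C_sorted hY ys_good (l0_min _) lt_r).
- exact: Flevel_card_lt (hj _ _ lt_ab) (AF a) (AF b).
Qed.
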